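(* Let $G$ be a compact connected Lie group with $n$-dimensional Lie algebra $\mathfrak g$, $\langle\cdot,\cdot\rangle$ an $\mathrm{Ad}_G$-invariant scalar product on $\mathfrak g$, $\mathbb I:\mathfrak g\to\mathfrak g$ symmetric positive definite, and $\epsilon$ a real parameter. Let $E_1,\dots,E_n$ be an orthonormal basis of $\mathfrak g$ and $\mathcal O_{E_i}$ the adjoint orbit of $E_i$. Fix $1\le k<n$. On $$\mathcal M=\{(\omega,e_1,\dots,e_n)\in\mathfrak g\times\mathcal O_{E_1}\times\cdots\times\mathcal O_{E_n}:\ \langle e_i,e_j\rangle=\delta_{ij}\}$$ consider the system $$\dot m=[m,\omega]+\sum_{i=1}^k\lambda^ie_i,\quad m=\mathbb I\omega,\qquad \dot e_i=\epsilon[e_i,\omega],\ i=1,\dots,n,$$ with $\lambda^i=-\sum_{j=1}^k\langle e_j,\mathbb I^{-1}[m,\omega]\rangle\mathbb A^{ij}$, where $(\mathbb A^{ij})$ is the inverse of $\mathbb A_{ij}=\langle e_i,\mathbb I^{-1}e_j\rangle$, $i,j=1,\dots,k$. Let $\mathcal H=\mathrm{span}\{e_1,\dots,e_k\}$, $\mathcal D=\mathrm{span}\{e_{k+1},\dots,e_n\}$, let $\mathrm{pr}_{\mathcal H},\mathrm{pr}_{\mathcal D}$ be the orthogonal projections onto them, and define the momentum $\mathbf m=\mathrm{pr}_{\mathcal D}\mathbb I\omega+\mathrm{pr}_{\mathcal H}\omega=\mathbf J\omega$, $\mathbf J=\mathrm{pr}_{\mathcal D}\mathbb I+\mathrm{pr}_{\mathcal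 H}$. Then along trajectories, $\omega=\mathbf J^{-1}\mathbf m$ and $(\mathbf m,e_{k+1},\dots,e_n)$ satisfies the closed system on $$\mathcal N=\{(\mathbf m,e_{k+1},\dots,e_n)\in\mathfrak g\times\mathcal O_{E_{k+1}}\times\cdots\times\mathcal O_{E_n}:\ \langle e_i,e_j\rangle=\delta_{ij}\}$$ given by $$\dot{\mathbf m}=\epsilon[\mathbf m,\omega]+(1-\epsilon)\,\mathrm{pr}_{\mathcal D}[\mathbb I\omega,\omega],\qquad \dot e_i=\epsilon[e_i,\omega],\quad i=k+1,\dots,n.$$
   Context: Here $\mathrm{pr}_{\mathcal H}=\mathbb E-\mathrm{pr}_{\mathcal D}$ where $\mathbb E$ is the identity, so both projections depend only on $e_{k+1},\dots,e_n$, and $\mathbf J$ is invertible. *)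

From HB Require Import structures.
From mathcomp Require Import all_boot all_order all_algebra.
From mathcomp Require Import all_classical all_reals all_analysis.
Set Implicit Arguments. Unset Strict Implicit. Unset Printing Implicit Defensive.
Import Order.TTheory GRing.Theory Num.Theory.
Import numFieldNormedType.Exports.
Local Open Scope classical_set_scope.
Local Open Scope ring_scope.

(* The Lie algebra g (dimension n) is modelled as 'rV[R]_n, the scalar
   product <.,.> being the standard dot product (coordinates in an
   orthonormal basis of the invariant scalar product). *)
Definition dotv (R : ringType) (n : nat) (u v : 'rV[R]_n) : R := (u *m v^T) 0 0.

(* br is a Lie bracket on g and <.,.> is ad-invariant (equivalently, for a
   connected group, Ad-invariant).  A finite-dimensional real Lie algebra
   with such a product is exactly the Lie algebra of a compact connected
   Lie group. *)
Definition invariant_lie_bracket (R : realType) (n : nat)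
  (br : 'rV[R]_n -> 'rV[R]_n -> 'rV[R]_n) : Prop :=
  [/\ (forall (a : R) x y z, br (a *: x + y) z = a *: br x z + br y z),
      (forall x y, br x y = - br y x),
      (forall x y z, br x (br y z) + br y (br z x) + br z (br x y) = 0)
    & (forall x y z, dotv (br x y) z = dotv x (br y z))].

(* Adjoint orbit of E: points Ad_{g} E, i.e. endpoints c(1) of curves
   c(t) = Ad_{g(t)} E with g(0) = 1, which are exactly the solutions of
   c' = [X(t), c], c(0) = E, for continuous X (X = g' g^{-1}). *)
Definition adjoint_orbit (R : realType) (n : nat)
  (br : 'rV[R]_n -> 'rV[R]_n -> 'rV[R]_n) (E : 'rV[R]_n) : set 'rV[R]_n :=
  [set y | exists (X c : R -> 'rV[R]_n),
      continuous X /\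
      (forall t : R, derivable c t 1 /\ 'D_1 c t = br (X t) (c t)) /\
      c 0 = E /\ c 1 = y].

Definition rows_mx (R : ringType) (d n : nat) (f : 'I_d -> 'rV[R]_n) : 'M[R]_(d, n) :=
  \matrix_(i < d) f i.

Definition orthoproj (R : realType) (d n : nat) (U : 'M[R]_(d, n)) (v : 'rV[R]_n)
  : 'rV[R]_n :=
  xget 0 [set p : 'rV[R]_n | (p <= U)%MS /\
            forall u : 'rV[R]_n, (u <= U)%MS -> dotv (v - p) u = 0].

Definition nh_multiplier (R : realType) (k n : nat)
  (br : 'rV[R]_n -> 'rV[R]_n -> 'rV[R]_n) (I : 'M[R]_n)
  (es : 'I_k -> 'rV[R]_n) (m om : 'rV[R]_n) (i : 'I_k) : R :=
  let A := \matrix_(i0 < k, j0 < k) dotv (es i0) (es j0 *m invmx I) in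
  - \sum_(j < k) dotv (es j) (br m om *m invmx I) * (invmx A) i j.

From HB Require Import structures.
From mathcomp Require Import all_boot all_order all_algebra.
From mathcomp Require Import all_classical all_reals all_analysis.
Import Order.TTheory GRing.Theory Num.Theory.
Import numFieldNormedType.Exports.
Local Open Scope classical_set_scope.
Local Open Scope ring_scope.

(* In the moving orthonormal frame,
     J v = sum_{j>k} <v I, e_j> e_j + sum_{i<=k} <v, e_i> e_i.
   J is injective: J v = 0 forces v to be orthogonal to H and v I to D, so <v, v I> = 0.
   Since every e_i rotates as e_i' = eps [e_i, omega], ad-invariance gives
     (sum_i <u, e_i> e_i)' = eps [sum_i <u, e_i> e_i, omega] + sum_i <u' - eps [u, omega], e_i> e_i.
   For u = omega I the D-components of u' - eps [u, omega] are those of (1 - eps) [omega I, omega],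
   the multiplier terms lying in H; for u = omega they vanish on H, because the multipliers are
   exactly those keeping omega' = m' I^-1 orthogonal to H, and [omega, omega] = 0. *)

Set Implicit Arguments. Unset Strict Implicit. Unset Printing Implicit Defensive.

Definition orthonormal (R : nzRingType) (p n : nat) (f : 'I_p -> 'rV[R]_n) : Prop :=
  forall i j, dotv (f i) (f j) = (i == j)%:R.

Definition posdef (R : realType) (n : nat) (A : 'M[R]_n) : Prop :=
  forall v : 'rV[R]_n, v != 0 -> 0 < dotv v (v *m A).

Section MatrixDerive.
Variable R : realType.

Lemma is_derive_entry m n (A : R -> 'M[R]_(m, n)) (dA : 'M[R]_(m, n)) (t : R) i j :
  is_derive t 1 A dA -> is_derive t 1 (fun s => A s i j) (dA i j).
Proof.
move=> hA; have dAt := @ex_derive _ _ _ _ _ _ _ hA.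
apply: DeriveDef; first exact: (derivable_mxP A t 1).1 dAt i j.
have := derive_mx dAt; rewrite derive_val => /(congr1 (fun M : 'M[R]_(m, n) => M i j)).
by rewrite mxE.
Qed.

Lemma is_derive_mx m n (A : R -> 'M[R]_(m, n)) (dA : 'M[R]_(m, n)) (t : R) :
  (forall i j, is_derive t 1 (fun s => A s i j) (dA i j)) -> is_derive t 1 A dA.
Proof.
move=> hA; have dAt : derivable A t 1.
  by apply/derivable_mxP => i j; exact: (@ex_derive _ _ _ _ _ _ _ (hA i j)).
by apply: DeriveDef => //; rewrite derive_mx //; apply/matrixP => i j; rewrite mxE derive_val.
Qed.

Lemma is_derive_mulmx m n p (A : R -> 'M[R]_(m, n)) (B : R -> 'M[R]_(n, p)) dA dB (t : R) :
  is_derive t 1 A dA -> is_derive t 1 B dB ->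
  is_derive t 1 (fun s => A s *m B s) (dA *m B t + A t *m dB).
Proof.
move=> hA hB; apply: is_derive_mx => i j.
have -> : (fun s => (A s *m B s) i j) = \sum_(l < n) ((fun s => A s i l) * (fun s => B s l j)).
  by apply/funext => s; rewrite fct_sumE mxE.
rewrite !mxE -big_split /=; apply: is_derive_eq.
  by apply: is_derive_sum => l; apply: is_deriveM; exact: is_derive_entry.
by apply: eq_bigr => l _ /=; rewrite addrC (mulrC (dA i l)).
Qed.

Lemma is_derive_trmx m n (A : R -> 'M[R]_(m, n)) dA (t : R) :
  is_derive t 1 A dA -> is_derive t 1 (fun s => (A s)^T) dA^T.
Proof.
move=> hA; apply: is_derive_mx => i j; rewrite mxE.
have -> : (fun s => (A s)^T i j) = (fun s => A s j i) by apply/funext => s; rewrite mxE.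
exact: is_derive_entry.
Qed.

Lemma is_derive_scale m n (c : R -> R) (A : R -> 'M[R]_(m, n)) dc dA (t : R) :
  is_derive t 1 c dc -> is_derive t 1 A dA ->
  is_derive t 1 (fun s => c s *: A s) (c t *: dA + dc *: A t).
Proof.
move=> hc hA; apply: is_derive_mx => i j; rewrite !mxE.
have -> : (fun s => (c s *: A s) i j) = c * (fun s => A s i j).
  by apply/funext => s; rewrite mxE.
apply: is_derive_eq; first by apply: is_deriveM => //; exact: is_derive_entry.
by rewrite /= (mulrC dc).
Qed.

Lemma is_derive_dotv n (u w : R -> 'rV[R]_n) du dw (t : R) :
  is_derive t 1 u du -> is_derive t 1 w dw ->
  is_derive t 1 (fun s => dotv (u s) (w s)) (dotv du (w t) + dotv (u t) dw).
Proof.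
move=> hu hw; apply: is_derive_eq.
  exact: is_derive_entry 0 0 (is_derive_mulmx hu (is_derive_trmx hw)).
by rewrite mxE.
Qed.

Lemma is_derive_mulmxr m n p (A : R -> 'M[R]_(m, n)) (C : 'M[R]_(n, p)) dA (t : R) :
  is_derive t 1 A dA -> is_derive t 1 (fun s => A s *m C) (dA *m C).
Proof.
move=> hA; apply: is_derive_eq; first exact: is_derive_mulmx hA (is_derive_cst C t 1).
by rewrite mulmx0 addr0.
Qed.

End MatrixDerive.

Section DotProduct.
Variables (R : realType) (n : nat).
Implicit Types u v w : 'rV[R]_n.

Lemma dotvE u v : dotv u v = \sum_j u 0 j * v 0 j.
Proof. by rewrite /dotv mxE; apply: eq_bigr => j _; rewrite mxE. Qed.

Lemma dotvC u v : dotv u v = dotv v u.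
Proof. by rewrite !dotvE; apply: eq_bigr => j _; rewrite mulrC. Qed.

Lemma dotvDl u v w : dotv (u + v) w = dotv u w + dotv v w.
Proof. by rewrite !dotvE -big_split; apply: eq_bigr => j _; rewrite mxE mulrDl. Qed.

Lemma dotvZl (a : R) u w : dotv (a *: u) w = a * dotv u w.
Proof. by rewrite !dotvE mulr_sumr; apply: eq_bigr => j _; rewrite mxE mulrA. Qed.

Lemma dotvNl u w : dotv (- u) w = - dotv u w.
Proof. by rewrite -scaleN1r dotvZl mulN1r. Qed.

Lemma dotvBl u v w : dotv (u - v) w = dotv u w - dotv v w.
Proof. by rewrite dotvDl dotvNl. Qed.

Lemma dotv0l w : dotv 0 w = 0.
Proof. by rewrite -(scale0r (0 : 'rV[R]_n)) dotvZl mul0r. Qed.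

Lemma dotvZr (a : R) u w : dotv w (a *: u) = a * dotv w u.
Proof. by rewrite !(dotvC w) dotvZl. Qed.

Lemma dotvNr u w : dotv w (- u) = - dotv w u.
Proof. by rewrite !(dotvC w) dotvNl. Qed.

Lemma dotv0r w : dotv w 0 = 0.
Proof. by rewrite dotvC dotv0l. Qed.

Lemma dotv_suml p (F : 'I_p -> 'rV[R]_n) w :
  dotv (\sum_(i < p) F i) w = \sum_(i < p) dotv (F i) w.
Proof.
elim/big_ind2: _ => [|x1 x2 y1 y2 <- <-|//]; first exact: dotv0l.
exact: dotvDl.
Qed.

Lemma dotv_sumr p (F : 'I_p -> 'rV[R]_n) w :
  dotv w (\sum_(i < p) F i) = \sum_(i < p) dotv w (F i).
Proof. by rewrite dotvC dotv_suml; apply: eq_bigr => i _; rewrite dotvC. Qed.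

Lemma dotv_sumZl p (a : 'I_p -> R) (f : 'I_p -> 'rV[R]_n) w :
  dotv (\sum_(i < p) a i *: f i) w = \sum_(i < p) a i * dotv (f i) w.
Proof. by rewrite dotv_suml; apply: eq_bigr => i _; rewrite dotvZl. Qed.

Lemma dotvv_eq0 u : dotv u u = 0 -> u = 0.
Proof.
rewrite dotvE => /eqP; rewrite psumr_eq0; last by move=> j _; rewrite -expr2 sqr_ge0.
move=> /allP uu0; apply/rowP => j; rewrite mxE.
by have /implyP/(_ isT) := uu0 j (mem_index_enum _); rewrite mulf_eq0 orbb => /eqP.
Qed.

End DotProduct.

Section Orthonormal.
Variables (R : realType) (p n : nat) (f : 'I_p -> 'rV[R]_n).
Hypothesis f_on : orthonormal f.

Lemma dotv_sumZ_orthonormal (a : 'I_p -> R) l : dotv (\sum_(i < p) a i *: f i) (f l) = a l.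
Proof.
rewrite dotv_sumZl (bigD1 l) //= f_on eqxx mulr1 big1 ?addr0 // => i /negbTE il.
by rewrite f_on il mulr0.
Qed.

Lemma orthoproj_orthonormal v : orthoproj (rows_mx f) v = \sum_(i < p) dotv v (f i) *: f i.
Proof.
set P := \sum_(i < p) _.
have P_span : (P <= rows_mx f)%MS.
  have -> : P = (\row_i dotv v (f i)) *m rows_mx f.
    by rewrite mulmx_sum_row; apply: eq_bigr => i _; rewrite mxE rowK.
  exact: submxMl.
have P_orth u : (u <= rows_mx f)%MS -> dotv (v - P) u = 0.
  case/submxP=> x ->; rewrite mulmx_sum_row dotv_sumr big1 // => i _.
  by rewrite rowK dotvZr dotvBl dotv_sumZ_orthonormal subrr mulr0.
apply: xget_unique => [//|q [q_span q_orth]].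
have Pq_span : (P - q <= rows_mx f)%MS by rewrite addmx_sub // eqmx_opp.
apply/eqP; rewrite eq_sym -subr_eq0; apply/eqP/dotvv_eq0.
have -> : dotv (P - q) (P - q) = dotv (v - q) (P - q) - dotv (v - P) (P - q).
  by rewrite -dotvBl (addrC v) addrKA opprK addrC.
by rewrite q_orth // P_orth // subrr.
Qed.

End Orthonormal.

Lemma orthonormal_expansion (R : realType) (n : nat) (f : 'I_n -> 'rV[R]_n) v :
  orthonormal f -> v = \sum_(i < n) dotv v (f i) *: f i.
Proof.
move=> f_on; pose M := rows_mx f.
have MMt : M *m M^T = 1%:M.
  apply/matrixP => i j; rewrite !mxE -f_on dotvE.
  by apply: eq_bigr => l _; rewrite !mxE.
rewrite -{1}[v]mulmx1 -(mulmx1C MMt) mulmxA mulmx_sum_row.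
apply: eq_bigr => i _; rewrite rowK dotvE mxE.
by congr (_ *: _); apply: eq_bigr => l _; rewrite !mxE.
Qed.

Section Frame.
Variables (R : realType) (k d : nat) (e : 'I_(k + d) -> 'rV[R]_(k + d)).
Hypothesis e_on : orthonormal e.

Local Notation prH := (orthoproj (rows_mx (fun i : 'I_k => e (lshift d i)))).
Local Notation prD := (orthoproj (rows_mx (fun j : 'I_d => e (rshift k j)))).

Lemma orthonormal_lshift : orthonormal (fun i : 'I_k => e (lshift d i)).
Proof. by move=> i j; rewrite e_on eq_lshift. Qed.

Lemma orthonormal_rshift : orthonormal (fun j : 'I_d => e (rshift k j)).
Proof. by move=> i j; rewrite e_on eq_rshift. Qed.

Lemma dotv_lshift_rshift i j : dotv (e (lshift d i)) (e (rshift k j)) = 0.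
Proof. by rewrite e_on eq_lrshift. Qed.

Lemma prH_sum v : prH v = \sum_(i < k) dotv v (e (lshift d i)) *: e (lshift d i).
Proof. exact/orthoproj_orthonormal/orthonormal_lshift. Qed.

Lemma prD_sum v : prD v = \sum_(j < d) dotv v (e (rshift k j)) *: e (rshift k j).
Proof. exact/orthoproj_orthonormal/orthonormal_rshift. Qed.

Lemma prD_add_prH v : prD v + prH v = v.
Proof.
rewrite prD_sum prH_sum addrC [RHS](orthonormal_expansion v e_on).
by rewrite big_split_ord.
Qed.

Lemma dotv_prD_prH_lshift x y i : dotv (prD x + prH y) (e (lshift d i)) = dotv y (e (lshift d i)).
Proof.
rewrite dotvDl prH_sum dotv_sumZ_orthonormal ?prD_sum; last exact: orthonormal_lshift.
rewrite dotv_sumZl big1 ?add0r // => j _.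
by rewrite (dotvC (e _)) dotv_lshift_rshift mulr0.
Qed.

Lemma dotv_prD_prH_rshift x y j : dotv (prD x + prH y) (e (rshift k j)) = dotv x (e (rshift k j)).
Proof.
rewrite dotvDl prD_sum dotv_sumZ_orthonormal ?prH_sum; last exact: orthonormal_rshift.
by rewrite dotv_sumZl big1 ?addr0 // => i _; rewrite dotv_lshift_rshift mulr0.
Qed.

Lemma momentum_injective (I : 'M[R]_(k + d)) w w' : posdef I ->
  prD (w *m I) + prH w = prD (w' *m I) + prH w' -> w = w'.
Proof.
move=> I_pos Jww'; apply/eqP; rewrite -subr_eq0; apply/eqP.
have vH i : dotv (w - w') (e (lshift d i)) = 0.
  by rewrite dotvBl -(dotv_prD_prH_lshift (w *m I) w) Jww' dotv_prD_prH_lshift subrr.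
have vD j : dotv ((w - w') *m I) (e (rshift k j)) = 0.
  by rewrite mulmxBl dotvBl -(dotv_prD_prH_rshift (w *m I) w) Jww' dotv_prD_prH_rshift subrr.
have vv : dotv (w - w') ((w - w') *m I) = 0.
  rewrite -{1}(prD_add_prH (w - w')) prD_sum prH_sum dotvDl !dotv_sumZl !big1 ?addr0 //.
    by move=> i _; rewrite vH mul0r.
  by move=> j _; rewrite (dotvC (e _)) vD mulr0.
by apply: contra_eq vv => /I_pos /lt0r_neq0.
Qed.

End Frame.

Section LieBracket.
Variables (R : realType) (n : nat) (br : 'rV[R]_n -> 'rV[R]_n -> 'rV[R]_n).
Hypothesis br_lie : invariant_lie_bracket br.

Lemma brDl x y z : br (x + y) z = br x z + br y z.
Proof. by case: br_lie => lin _ _ _; have := lin 1 x y z; rewrite !scale1r. Qed.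

Lemma br0l z : br 0 z = 0.
Proof. by apply: (addrI (br 0 z)); rewrite -brDl !addr0. Qed.

Lemma brZl (a : R) x z : br (a *: x) z = a *: br x z.
Proof. by case: br_lie => lin _ _ _; rewrite -[a *: x]addr0 lin br0l addr0. Qed.

Lemma br_suml p (a : 'I_p -> R) (x : 'I_p -> 'rV[R]_n) z :
  br (\sum_(i < p) a i *: x i) z = \sum_(i < p) a i *: br (x i) z.
Proof.
elim/big_ind2: _ => [|x1 x2 y1 y2 <- <-|i _]; [exact: br0l|exact: brDl|exact: brZl].
Qed.

Lemma brxx x : br x x = 0.
Proof.
case: br_lie => _ anti _ _; apply/eqP.
have /eqP := anti x x; rewrite -subr_eq0 opprK -mulr2n -scaler_nat.
by rewrite scaler_eq0 pnatr_eq0.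
Qed.

Lemma dotv_brr u x w : dotv u (br x w) = - dotv (br u w) x.
Proof. by case: br_lie => _ anti _ inv; rewrite anti dotvNr inv. Qed.

End LieBracket.

Section NonholonomicMultiplier.
Variables (R : realType) (k n : nat) (I : 'M[R]_n) (es : 'I_k -> 'rV[R]_n).
Hypothesis I_pos : posdef I.

Lemma posdef_unitmx : I \in unitmx.
Proof.
rewrite unitmxE unitfE; apply/negP => /det0P[v v_neq0 vI0].
by have := I_pos v_neq0; rewrite vI0 dotv0r ltxx.
Qed.

Lemma posdef_invmx : posdef (invmx I).
Proof.
move=> v v_neq0; set w := v *m invmx I.
have vE : v = w *m I by rewrite mulmxKV // posdef_unitmx.
have w_neq0 : w != 0 by apply: contra_neq v_neq0 => w0; rewrite vE w0 mul0mx.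
by rewrite {1}vE dotvC; exact: I_pos.
Qed.

Hypothesis es_on : orthonormal es.

Lemma gram_unitmx : \matrix_(i, j) dotv (es i) (es j *m invmx I) \in unitmx.
Proof.
rewrite unitmxE unitfE; apply/negP => /det0P[x x_neq0 xA0].
pose y := \sum_(i < k) x 0 i *: es i.
have y_orth j : dotv y (es j *m invmx I) = 0.
  have := congr1 (fun M : 'rV_k => M 0 j) xA0; rewrite !mxE /= => <-.
  by rewrite dotv_sumZl; apply: eq_bigr => i _; rewrite mxE.
have yy0 : dotv y (y *m invmx I) = 0.
  rewrite {2}/y mulmx_suml dotv_sumr big1 // => i _.
  by rewrite -scalemxAl dotvZr y_orth mulr0.
have y0 : y = 0 by apply/eqP; apply: contraT => /posdef_invmx; rewrite yy0 ltxx.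
case/eqP: x_neq0; apply/rowP => l.
by rewrite mxE -(dotv_sumZ_orthonormal es_on (fun i => x 0 i)) -/y y0 dotv0l.
Qed.

Lemma nh_multiplier_constraint br m om j :
  dotv ((br m om + \sum_(i < k) nh_multiplier br I es m om i *: es i) *m invmx I) (es j) = 0.
Proof.
set A := \matrix_(i, j) dotv (es i) (es j *m invmx I).
pose cc l := dotv (es l) (br m om *m invmx I).
have lambdaE i : nh_multiplier br I es m om i = - \sum_(l < k) cc l * invmx A i l by [].
have sum_lambda : \sum_(i < k) nh_multiplier br I es m om i * A j i = - cc j.
  transitivity (- \sum_(l < k) cc l * (A *m invmx A) j l); last first.
    rewrite mulmxV ?gram_unitmx // (bigD1 j) //= mxE eqxx mulr1 big1 ?addr0 // => l /negbTE lj.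
    by rewrite mxE eq_sym lj mulr0.
  rewrite (eq_bigr (fun i => - \sum_(l < k) cc l * invmx A i l * A j i)); last first.
    by move=> i _; rewrite lambdaE mulNr mulr_suml.
  rewrite sumrN exchange_big; congr (- _); apply: eq_bigr => l _.
  by rewrite mxE mulr_sumr; apply: eq_bigr => i _; rewrite -mulrA (mulrC (invmx A i l)).
rewrite mulmxDl mulmx_suml dotvDl dotv_suml.
rewrite (eq_bigr (fun i => nh_multiplier br I es m om i * A j i)); last first.
  by move=> i _; rewrite -scalemxAl dotvZl mxE dotvC.
by rewrite sum_lambda dotvC subrr.
Qed.

End NonholonomicMultiplier.

Section RotatingFrame.
Variables (R : realType) (n : nat) (br : 'rV[R]_n -> 'rV[R]_n -> 'rV[R]_n).
Hypothesis br_lie : invariant_lie_bracket br.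

Lemma is_derive_rotating_proj p (f : 'I_p -> R -> 'rV[R]_n) (u : R -> 'rV[R]_n)
    du (w : 'rV[R]_n) (eps t : R) :
  (forall i, is_derive t 1 (f i) (eps *: br (f i t) w)) -> is_derive t 1 u du ->
  is_derive t 1 (fun s => \sum_(i < p) dotv (u s) (f i s) *: f i s)
    (eps *: br (\sum_(i < p) dotv (u t) (f i t) *: f i t) w
     + \sum_(i < p) dotv (du - eps *: br (u t) w) (f i t) *: f i t).
Proof.
move=> f_rot u_der.
have := is_derive_sum (fun i => is_derive_scale (is_derive_dotv u_der (f_rot i)) (f_rot i)).
rewrite fct_sumE => /is_derive_eq; apply.
rewrite br_suml // scaler_sumr -big_split; apply: eq_bigr => i _ /=.
by rewrite !scalerA mulrC dotvBl dotvZr dotv_brr // dotvZl mulrN.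
Qed.

End RotatingFrame.

Section MomentumDerivative.
Variables (R : realType) (k d : nat) (br : 'rV[R]_(k + d) -> 'rV[R]_(k + d) -> 'rV[R]_(k + d)).
Variables (I : 'M[R]_(k + d)) (eps t : R).
Variables (omega : R -> 'rV[R]_(k + d)) (e : 'I_(k + d) -> R -> 'rV[R]_(k + d)).
Hypotheses (br_lie : invariant_lie_bracket br) (I_pos : posdef I).
Hypothesis e_on : \forall s \near t, orthonormal (e^~ s).
Hypothesis e_rot : forall i, is_derive t 1 (e i) (eps *: br (e i t) (omega t)).
Hypothesis m_eq : is_derive t 1 (fun s => omega s *m I)
  (br (omega t *m I) (omega t) + \sum_(i < k)
     nh_multiplier br I (fun i0 => e (lshift d i0) t) (omega t *m I) (omega t) i
       *: e (lshift d i) t).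

Local Notation prH s := (orthoproj (rows_mx (fun i : 'I_k => e (lshift d i) s))).
Local Notation prD s := (orthoproj (rows_mx (fun j : 'I_d => e (rshift k j) s))).

Lemma is_derive_momentum :
  is_derive t 1 (fun s => prD s (omega s *m I) + prH s (omega s))
    (eps *: br (prD t (omega t *m I) + prH t (omega t)) (omega t)
     + (1 - eps) *: prD t (br (omega t *m I) (omega t))).
Proof.
have e_on_t : orthonormal (e^~ t) := nbhs_singleton e_on.
move: m_eq; set c := br (omega t *m I) (omega t); set dm := c + _ => m_der.
have om_der : is_derive t 1 omega (dm *m invmx I).
  have -> : omega = (fun s => omega s *m I *m invmx I).
    by apply/funext => s; rewrite mulmxK // posdef_unitmx.
  exact: is_derive_mulmxr m_der.
have dmH i : dotv (dm *m invmx I) (e (lshift d i) t) = 0.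
  exact: nh_multiplier_constraint I_pos (orthonormal_lshift e_on_t) _ _ _ i.
have dmD j : dotv (dm - eps *: c) (e (rshift k j) t) = (1 - eps) * dotv c (e (rshift k j) t).
  rewrite dotvBl dotvDl dotvZl dotv_sumZl big1 ?addr0 ?mulrBl ?mul1r // => i _.
  by rewrite (dotv_lshift_rshift e_on_t) mulr0.
have hD := is_derive_rotating_proj br_lie (f := fun j => e (rshift k j)) (fun j => e_rot _) m_der.
have hH := is_derive_rotating_proj br_lie (f := fun i => e (lshift d i)) (fun i => e_rot _) om_der.
apply: near_eq_is_derive (is_derive_eq (is_deriveD hD hH) _).
  by apply: filterS e_on => s s_on; rewrite (prD_sum s_on) (prH_sum s_on).
rewrite brxx // scaler0 subr0.
have -> : \sum_(i < k) dotv (dm *m invmx I) (e (lshift d i) t) *: e (lshift d i) t = 0.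
  by apply: big1 => i _; rewrite dmH scale0r.
rewrite addr0 -/c.
have -> : \sum_(j < d) dotv (dm - eps *: c) (e (rshift k j) t) *: e (rshift k j) t
    = (1 - eps) *: prD t c.
  by rewrite (prD_sum e_on_t) scaler_sumr; apply: eq_bigr => j _; rewrite dmD scalerA.
by rewrite (prD_sum e_on_t (omega t *m I)) (prH_sum e_on_t) brDl // scalerDr addrAC.
Qed.

End MomentumDerivative.

Unset Implicit Arguments.
(* n = k + d with k >= 1 and d >= 1 (i.e. 1 <= k < n);
   e (lshift d i) = e_{i+1} (i < k),  e (rshift k j) = e_{k+1+j} (j < d). *)
Theorem proposition2 (R : realType) (k d : nat) (hk : (0 < k)%N) (hd : (0 < d)%N)
  (br : 'rV[R]_(k + d) -> 'rV[R]_(k + d) -> 'rV[R]_(k + d))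
  (II : 'M[R]_(k + d)) (eps : R) (E : 'I_(k + d) -> 'rV[R]_(k + d))
  (a b : R) (omega : R -> 'rV[R]_(k + d)) (e : 'I_(k + d) -> R -> 'rV[R]_(k + d)) :
  invariant_lie_bracket br ->
  II^T = II ->
  (forall v : 'rV[R]_(k + d), v != 0 -> 0 < dotv v (v *m II)) ->
  (forall i j, dotv (E i) (E j) = (i == j)%:R) ->
  (* the trajectory stays in M *)
  (forall t, a < t < b ->
     (forall i, adjoint_orbit br (E i) (e i t)) /\
     (forall i j, dotv (e i t) (e j t) = (i == j)%:R)) ->
  (* the equations of motion *)
  (forall t, a < t < b ->
     derivable (fun s => omega s *m II) t 1 /\
     'D_1 (fun s => omega s *m II) t =
       br (omega t *m II) (omega t) +
       \sum_(i < k) nh_multiplier br II (fun i0 => e (lshift d i0) t)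
                      (omega t *m II) (omega t) i *: e (lshift d i) t) ->
  (forall i t, a < t < b ->
     derivable (e i) t 1 /\ 'D_1 (e i) t = eps *: br (e i t) (omega t)) ->
  let prH := fun t => orthoproj (rows_mx (fun i : 'I_k => e (lshift d i) t)) in
  let prD := fun t => orthoproj (rows_mx (fun j : 'I_d => e (rshift k j) t)) in
  let J := fun t (w : 'rV[R]_(k + d)) => prD t (w *m II) + prH t w in
  let mm := fun t => J t (omega t) in
  forall t, a < t < b ->
    (* omega = J^{-1} m *)
    (forall w, J t w = mm t -> w = omega t) /\
    (* the reduced equations *)
    (derivable mm t 1 /\
     'D_1 mm t = eps *: br (mm t) (omega t)
                 + (1 - eps) *: prD t (br (omega t *m II) (omega t))) /\
    (forall j : 'I_d, derivable (e (rshift k j)) t 1 /\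
       'D_1 (e (rshift k j)) t = eps *: br (e (rshift k j) t) (omega t)) /\
    (* (m, e_{k+1},...,e_n) lies in N *)
    (forall j : 'I_d, adjoint_orbit br (E (rshift k j)) (e (rshift k j) t)) /\
    (forall j1 j2 : 'I_d, dotv (e (rshift k j1) t) (e (rshift k j2) t) = (j1 == j2)%:R).
Proof.
move=> br_lie _ I_pos _ traj motion rot prH prD J mm t ht.
have near_t : \forall s \near t, a < s < b by apply: near_in_itvoo; rewrite in_itv /= ht.
have e_on : \forall s \near t, orthonormal (e^~ s) by apply: filterS near_t => s /traj[].
have e_rot i : is_derive t 1 (e i) (eps *: br (e i t) (omega t)).
  by have [/derivableP + <-] := rot i t ht.
have [m_der m_val] := motion t ht; have := derivableP m_der; rewrite m_val => m_eq.
have mm_der := is_derive_momentum br_lie I_pos e_on e_rot m_eq.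
have [orbit e_on_t] := traj t ht.
split; first by move=> w; exact: (momentum_injective (e := fun i => e i t) e_on_t I_pos).
split; first by split; [exact: (@ex_derive _ _ _ _ _ _ _ mm_der)
                       | exact: (@derive_val _ _ _ _ _ _ _ mm_der)].
split; first by move=> j; exact: rot.
by split=> [j | j1 j2]; [exact: orbit | exact: (orthonormal_rshift (e := fun i => e i t) e_on_t)].
Qed.
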